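(* Let $n,k$ be positive integers with $k(k+1)\mid n$, and let $\mathcal C$ be the code of Construction B (see context). Then $\mathcal C$ is a uniform $\bigl(n,(k-1+\frac1k)n,k,k+1\bigr)$-BAC over $\mathbb{F}_q$ in which every bucket has length $(k-1+\frac1k)\frac{n}{k+1}$.
   Context: Fix a finite field $\mathbb{F}_q$; $[n]=\{1,\dots,n\}$. An $(n,N,k,m)$-batch array code (BAC) over $\mathbb{F}_q$ is an $\mathbb{F}_q$-linear map $\mathcal{C}:\mathbf x=(x_1,\dots,x_n)\in\mathbb{F}_q^n\mapsto(\mathbf c_1,\dots,\mathbf c_m)$ with buckets $\mathbf c_\ell\in\mathbb{F}_q^{N_\ell}$, $N_\ell\ge1$ independent of $\mathbf x$, $\sum_\ell N_\ell=N$, such that for every multiset $\{\{i_1,\dots,i_k\}\}$ of elements of $[n]$ there is a partition of $[m]$ into $k$ sets $R_1,\dots,R_k$ such that for each $j\in[k]$, $x_{i_j}$ is an $\mathbb{F}_q$-linear combination of values $f_\ell(\mathbf c_\ell)$, $\ell\in R_j$, for some linear functionals $f_\ell:\mathbb{F}_q^{N_\ell}\to\mathbb{F}_q$ (independent of $\mathbf x$). It is uniform if all $N_\ell$ are equal. Code $\mathcal C_0$: for $n_0$ with $k\mid n_0$ and $\mathbf z=(z_1,\dots,z_{n_0})$, let $P_\ell=\{(\ell-1)\frac{n_0}{k}+b:1\le b\le \frac{n_0}{k}\}$ for $\ell\in[k]$, let $\mathcal C_0(\mathbf z)=(\mathbf d_1,\dots,\mathbf d_{k+1})$ where $\mathbf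 d_\ell$ ($\ell\in[k]$) is the vector of entries $z_i$, $i\in[n_0]\setminus P_\ell$, and $\mathbf d_{k+1}=\sum_{t=0}^{k-1}(z_{t\frac{n_0}{k}+1},\dots,z_{t\frac{n_0}{k}+\frac{n_0}{k}})$. Construction B: set $n_0=\frac{n}{k+1}$; for $\mathbf x\in\mathbb{F}_q^n$ and $j\in[k+1]$ let $\mathbf x_j=(x_{(j-1)n_0+1},\dots,x_{jn_0})$ and $\mathcal C_0(\mathbf x_j)=(\mathbf c_{j,1},\dots,\mathbf c_{j,k+1})$; define $\mathcal C(\mathbf x)=(\mathbf c_1,\dots,\mathbf c_{k+1})$ with $\mathbf c_\ell=(\mathbf c_{1,\ell},\mathbf c_{2,\ell-1},\dots,\mathbf c_{k+1,\ell-k})$, second indices taken modulo $k+1$ with representatives in $[k+1]$. *)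

From HB Require Import structures.
From mathcomp Require Import all_boot all_order all_algebra.

Set Implicit Arguments.
Unset Strict Implicit.
Unset Printing Implicit Defensive.

Import GRing.Theory.
Local Open Scope ring_scope.

(* Conventions: all indices are 0-based (paper index i corresponds to i-1 here).
   Vectors x in F_q^n are row vectors 'rV[F]_n; buckets are sequences over F
   whose length must not depend on x. *)

Definition rv2seq (F : Type) (n : nat) (x : 'rV[F]_n) : seq F :=
  [seq x ord0 i | i <- enum 'I_n].

(* A multiset {{i_1,..,i_k}} is given by an (ordered)
   k-tuple req : 'I_k -> 'I_n; the partition R_1..R_k of [m] is given by the
   block-assignment map R : 'I_m -> 'I_k (blocks nonempty); a linear functional
   f_l on F^(Nl l) is c |-> sum_i w l i * c_i. *)
Definition is_BAC (F : fieldType) (n N k m : nat) (Nl : 'I_m -> nat)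
    (C : 'I_m -> 'rV[F]_n -> seq F) : Prop :=
  [/\ (forall l x, size (C l x) = Nl l),
      (forall l, 0 < Nl l)%N,
      (\sum_(l < m) Nl l)%N = N,
      (forall l (a : F) (x y : 'rV[F]_n) (i : nat),
          (C l (a *: x + y))`_i = a * (C l x)`_i + (C l y)`_i)
    & forall req : 'I_k -> 'I_n,
        exists R : 'I_m -> 'I_k,
          (forall j, exists l, R l = j) /\
          exists (a : 'I_m -> F) (w : 'I_m -> nat -> F),
            forall (x : 'rV[F]_n) (j : 'I_k),
              x ord0 (req j) =
              \sum_(l < m | R l == j) a l * \sum_(i < Nl l) w l i * (C l x)`_i ].

Definition is_uniform_BAC (F : fieldType) (n N k m : nat) (Nl : 'I_m -> nat)
    (C : 'I_m -> 'rV[F]_n -> seq F) : Prop :=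
  is_BAC N k Nl C /\ forall l l', Nl l = Nl l'.

(* P_l = [l*b, (l+1)*b) with b = n0/k.  Bucket l < k: entries z_i, i notin P_l,
   in increasing order of i; bucket k: sum of the k blocks of z. *)
Definition C0 (F : fieldType) (k n0 : nat) (z : seq F) (l : nat) : seq F :=
  let b := (n0 %/ k)%N in
  if (l < k)%N then
    [seq z`_i | i <- iota 0 n0 & ~~ ((l * b <= i) && (i < l.+1 * b))%N]
  else
    [seq \sum_(t < k) z`_(t * b + j)%N | j <- iota 0 b].

(* Construction B: n0 = n/(k+1), x_j the j-th block of length n0 (0-based j),
   bucket l = (c_{0,l}, c_{1,l-1}, ..., c_{k,l-k}) with second indices mod k+1. *)
Definition constructionB (F : fieldType) (n k : nat) (l : 'I_k.+1)
    (x : 'rV[F]_n) : seq F :=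
  let n0 := (n %/ k.+1)%N in
  let xs := rv2seq x in
  let xj (j : nat) := [seq xs`_(j * n0 + i)%N | i <- iota 0 n0] in
  flatten [seq C0 k n0 (xj j) ((l + k.+1 - j) %% k.+1)%N | j <- iota 0 k.+1].

From HB Require Import structures.
From mathcomp Require Import all_boot all_order all_algebra.
From mathcomp Require Import zify ring.
Import GRing.Theory Num.Theory.
Local Open Scope ring_scope.
Set Implicit Arguments.
Unset Strict Implicit.

(* Write n = k m (k+1) and a requested index q as the entry t m + r of the block x_J
   (t < k, r < m).  Bucket l holds the C_0-bucket s = l - J (mod k+1) of x_J; for s < k this
   lists x_J without its part P_s, and s = k is the parity bucket.  So x_q is an entry of
   every bucket except the two with s = t and s = k, and those two recover it jointly: entry r
   of the parity bucket minus the entries x_J[t' m + r], t' <> t, stored in the s = t bucket.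
   k requests are then served by k+1 buckets greedily: each request takes an unused bucket
   storing it; if none is left, all remaining buckets are bad for it, so exactly two remain and
   this is the last request, which takes both. *)

Section GreedyPartition.

Variables (T : finType) (K : nat) (serves : 'I_K -> {set T} -> Prop) (good : 'I_K -> pred T).

Hypothesis serves_subset :
  forall j (S S' : {set T}), S \subset S' -> serves j S -> serves j S'.
Hypothesis serves_good : forall j l, good j l -> serves j [set l].
Hypothesis serves_pair : forall j l1 l2, l1 != l2 -> serves j [set l1; l2].
Hypothesis few_bad : forall j, (#|[set l | ~~ good j l]| <= 2)%N.

Lemma greedy_partition_in (j0 : 'I_K) s (B : {set T}) : (s <= K)%N -> (s < #|B|)%N ->
  exists R : T -> 'I_K, forall j : 'I_K, (j < s)%N ->
    (exists2 l, l \in B & R l = j) /\ serves j (B :&: [set l | R l == j]).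
Proof.
elim: s B => [|s IHs] B sK sB; first by exists (fun=> j0).
pose js : 'I_K := Ordinal sK.
have [b /andP [bB good_b] | no_good] := pickP (fun b => (b \in B) && good js b).
  have sB' : (s < #|B :\ b|)%N by rewrite (cardsD1 b) bB in sB.
  have [R' HR'] := IHs (B :\ b) (ltnW sK) sB'.
  exists (fun l => if l == b then js else R' l) => j; rewrite ltnS leq_eqVlt.
  case/orP => [/eqP jE | lt_js].
    have -> : j = js by apply: val_inj.
    split; first by exists b; rewrite ?eqxx.
    apply: serves_subset (serves_good good_b).
    by rewrite sub1set !inE bB !eqxx.
  have [[l lB Rl] Sj] := HR' j lt_js.
  have jb : js != j by rewrite -val_eqE /= neq_ltn lt_js orbT.
  split; first by move: lB; rewrite !inE => /andP [/negbTE lb lB]; exists l; rewrite ?lb.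
  congr serves: Sj; apply/setP => l'; rewrite !inE.
  by case: eqVneq => [->|] //=; rewrite (negbTE jb) andbF.
have B_bad : B \subset [set l | ~~ good js l].
  by apply/subsetP => l lB; rewrite inE; have := no_good l; rewrite lB /= => ->.
have cardB2 : #|B| = 2.
  by have := leq_trans (subset_leq_card B_bad) (few_bad js); lia.
have s0 : s = 0%N by lia.
have /cards2P [b1 [b2 [b12 ->]]] : #|B| == 2 by rewrite cardB2.
exists (fun=> js) => j; rewrite s0 ltnS leqn0 => /eqP j0E.
have -> : j = js by apply: val_inj; rewrite /= j0E s0.
split; first by exists b1; rewrite ?inE ?eqxx.
congr serves: (serves_pair js b12).
by apply/setP => l; rewrite !inE eqxx andbT.
Qed.

Lemma greedy_partition : (0 < K)%N -> (K < #|T|)%N ->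
  exists R : T -> 'I_K,
    (forall j, exists l, R l = j) /\ forall j, serves j [set l | R l == j].
Proof.
move=> K_gt0; rewrite -cardsT => KT.
have [R HR] := greedy_partition_in (Ordinal K_gt0) (leqnn K) KT.
exists R; split=> j; have [[l _ Rl] Sj] := HR j (ltn_ord j); first by exists l.
by rewrite setTI in Sj.
Qed.

End GreedyPartition.

Section LinearReadout.

Variables (F : fieldType) (V : lmodType F).

Definition coord_of (c : V -> seq F) (v : V -> F) :=
  exists i, forall x, (i < size (c x))%N /\ (c x)`_i = v x.

Definition lin_comb_of (c : V -> seq F) (d : nat) (v : V -> F) :=
  exists w : nat -> F, forall x, v x = \sum_(i < d) w i * (c x)`_i.

Lemma lin_comb_coord c d v :
  (forall x, size (c x) = d) -> coord_of c v -> lin_comb_of c d v.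
Proof.
move=> size_c [i Hi]; exists (fun i' => (i' == i)%:R) => x.
have [] := Hi x; rewrite size_c => lt_id <-.
rewrite (bigD1 (Ordinal lt_id)) //= eqxx mul1r big1 ?addr0 // => i'.
by rewrite -val_eqE /= => /negbTE ->; rewrite mul0r.
Qed.

Lemma lin_comb0 c d : lin_comb_of c d (fun=> 0).
Proof. by exists (fun=> 0) => x; rewrite big1 // => i _; rewrite mul0r. Qed.

Lemma lin_comb_scale_add c d (a : F) v1 v2 v :
  lin_comb_of c d v1 -> lin_comb_of c d v2 ->
  (forall x, v x = a * v1 x + v2 x) -> lin_comb_of c d v.
Proof.
move=> [w1 H1] [w2 H2] Hv; exists (fun i => a * w1 i + w2 i) => x.
rewrite Hv H1 H2 mulr_sumr -big_split /=; apply: eq_bigr => i _.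
by rewrite mulrDl mulrA.
Qed.

Lemma lin_comb_opp c d v : lin_comb_of c d v -> lin_comb_of c d (fun x => - v x).
Proof.
move=> Hv; apply: (lin_comb_scale_add (a := -1)) Hv (lin_comb0 c d) _ => x.
by rewrite addr0 mulN1r.
Qed.

Lemma lin_comb_sum c d (A : finType) (P : pred A) (f : A -> V -> F) :
  (forall t, P t -> lin_comb_of c d (f t)) ->
  lin_comb_of c d (fun x => \sum_(t | P t) f t x).
Proof.
move=> Hf; elim: (index_enum A) => [|t r IHr].
  apply: (lin_comb_scale_add (a := 0)) (lin_comb0 c d) (lin_comb0 c d) _ => x.
  by rewrite big_nil mul0r addr0.
have [Pt|nPt] := boolP (P t).
  by apply: (lin_comb_scale_add (a := 1)) (Hf t Pt) IHr _ => x; rewrite big_cons Pt mul1r.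
apply: (lin_comb_scale_add (a := 0)) (lin_comb0 c d) IHr _ => x.
by rewrite big_cons (negbTE nPt) mul0r add0r.
Qed.

Lemma scalar_nth_map (A : Type) (phi : A -> V -> F) (s : seq A) i :
  (forall t, scalar (phi t)) -> scalar (fun x => [seq phi t x | t <- s]`_i).
Proof.
move=> Hphi a x y; elim: s i => [|t s IHs] [|i] /=; rewrite ?nth_nil ?mulr0 ?addr0 //.
exact: Hphi.
Qed.

Lemma scalar_sum (A : finType) (P : pred A) (f : A -> V -> F) :
  (forall t, scalar (f t)) -> scalar (fun x => \sum_(t | P t) f t x).
Proof.
by move=> Hf a x y; rewrite mulr_sumr -big_split /=; apply: eq_bigr => t _; apply: Hf.
Qed.

Section Flatten.

Variables (A : Type) (f : A -> V -> seq F).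
Hypothesis size_f : forall j x y, size (f j x) = size (f j y).

Lemma scalar_nth_flatten r i :
  (forall j i, scalar (fun x => (f j x)`_i)) ->
  scalar (fun x => (flatten [seq f j x | j <- r])`_i).
Proof.
move=> Hf a x y; elim: r i => [|j r IHr] i /=; first by rewrite !nth_nil mulr0 addr0.
rewrite !nth_cat (size_f j y x) (size_f j (a *: x + y) x).
by case: ifP => _; [apply: Hf | apply: IHr].
Qed.

Lemma coord_of_flatten r0 J r1 v :
  coord_of (f J) v -> coord_of (fun x => flatten [seq f j x | j <- r0 ++ J :: r1]) v.
Proof.
case=> i Hi; exists (size (flatten [seq f j 0 | j <- r0]) + i)%N => x.
have size_r0 : size (flatten [seq f j x | j <- r0]) = size (flatten [seq f j 0 | j <- r0]).
  by rewrite !size_flatten /shape -!map_comp; congr sumn; apply: eq_map => j /=; apply: size_f.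
have [lt_i <-] := Hi x.
rewrite map_cat flatten_cat size_cat nth_cat size_r0 ltn_add2l; split.
  by rewrite /= size_cat ltn_addr.
by rewrite ltnNge leq_addr addKn /= nth_cat lt_i.
Qed.

End Flatten.

Variables (I : finType) (C : I -> V -> seq F) (Nl : I -> nat).

Definition recovers (S : {set I}) (v : V -> F) :=
  exists c : I -> nat -> F,
    forall x, v x = \sum_(l in S) \sum_(i < Nl l) c l i * (C l x)`_i.

Lemma recovers_subset (S S' : {set I}) v : S \subset S' -> recovers S v -> recovers S' v.
Proof.
move=> sub [c Hc]; exists (fun l i => if l \in S then c l i else 0) => x.
rewrite Hc [RHS](big_setID S) /= setIC (setIidPl sub) [X in _ = _ + X]big1 ?addr0.
  by apply: eq_bigr => l ->.
by move=> l /setDP [_ /negbTE lS]; apply: big1 => i _; rewrite lS mul0r.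
Qed.

Lemma recovers_sum (S : {set I}) v (vl : I -> V -> F) :
  (forall l, l \in S -> lin_comb_of (C l) (Nl l) (vl l)) ->
  (forall x, v x = \sum_(l in S) vl l x) -> recovers S v.
Proof.
move=> Hl Hv.
have /fin_all_exists [c Hc] : forall l, exists w : nat -> F,
    l \in S -> forall x, vl l x = \sum_(i < Nl l) w i * (C l x)`_i.
  move=> l; have [/Hl [w Hw] | _] := boolP (l \in S); first by exists w.
  by exists (fun=> 0).
by exists c => x; rewrite Hv; apply: eq_bigr => l lS; apply: Hc.
Qed.

Lemma recovers_batch K (R : I -> 'I_K) (v : 'I_K -> V -> F) :
  (forall j, recovers [set l | R l == j] (v j)) ->
  exists (a : I -> F) (w : I -> nat -> F), forall x j,
    v j x = \sum_(l | R l == j) a l * \sum_(i < Nl l) w l i * (C l x)`_i.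
Proof.
move=> /fin_all_exists [c Hc]; exists (fun=> 1), (fun l => c (R l) l) => x j.
rewrite Hc; apply: eq_big => [l|l]; first by rewrite inE.
by rewrite inE mul1r => /eqP ->.
Qed.

End LinearReadout.

Definition subbucket (k l j : nat) := ((l + k.+1 - j) %% k.+1)%N.

Lemma subbucketE k l j : (l < k.+1)%N -> (j < k.+1)%N ->
  subbucket k l j = if (j <= l)%N then (l - j)%N else (l + k.+1 - j)%N.
Proof.
move=> lk jk; rewrite /subbucket; case: leqP => [jl|lj]; last by rewrite modn_small; lia.
by rewrite -addnBAC // modnDr modn_small; lia.
Qed.

Lemma subbucket_lt k l j : (subbucket k l j < k.+1)%N.
Proof. exact: ltn_pmod. Qed.

Lemma subbucket_injl k l1 l2 j : (l1 < k.+1)%N -> (l2 < k.+1)%N -> (j < k.+1)%N ->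
  subbucket k l1 j = subbucket k l2 j -> l1 = l2.
Proof. by move=> lt1 lt2 lt3; rewrite !subbucketE //; do 2 case: ifP; lia. Qed.

Lemma subbucket_injr k l j1 j2 : (l < k.+1)%N -> (j1 < k.+1)%N -> (j2 < k.+1)%N ->
  subbucket k l j1 = subbucket k l j2 -> j1 = j2.
Proof. by move=> lt1 lt2 lt3; rewrite !subbucketE //; do 2 case: ifP; lia. Qed.

Lemma in_block_range b s u : (0 < b)%N ->
  ((s * b <= u) && (u < s.+1 * b))%N = (u %/ b == s)%N.
Proof. by move=> b_gt0; rewrite -leq_divRL // -ltn_divLR // eqn_leq andbC. Qed.

Section CodeC0.

Variables (F : fieldType) (k : nat).

Lemma size_C0_indep n0 s (z z' : seq F) : size (C0 k n0 z s) = size (C0 k n0 z' s).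
Proof. by rewrite /C0; case: ifP; rewrite !size_map. Qed.

Lemma scalar_nth_C0 (V : lmodType F) (z : V -> seq F) n0 s i :
  (forall u, scalar (fun x => (z x)`_u)) -> scalar (fun x => (C0 k n0 (z x) s)`_i).
Proof.
move=> z_scalar; rewrite /C0; case: (s < k)%N.
  exact: (scalar_nth_map (phi := fun u x => (z x)`_u)).
apply: (scalar_nth_map (phi := fun r x => \sum_(t < k) (z x)`_(t * (n0 %/ k) + r))) => r.
exact: scalar_sum.
Qed.

Hypothesis k_gt0 : (0 < k)%N.
Variable b : nat.

Lemma size_C0 s (z : seq F) :
  size (C0 k (k * b) z s) = if (s < k)%N then (k * b - b)%N else b.
Proof.
rewrite /C0 mulKn //; case: ltnP => [lt_sk|_]; last by rewrite size_map size_iota.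
set kept := fun i => ~~ ((s * b <= i) && (i < s.+1 * b))%N.
have count_kept (c : bool) i0 d : (forall i, i0 <= i < i0 + d -> kept i = c)%N ->
    count kept (iota i0 d) = (c * d)%N.
  move=> Hc; rewrite (@eq_in_count _ _ (fun=> c)) => [|i]; last by rewrite mem_iota => /Hc.
  by case: c {Hc}; rewrite ?count_predT ?count_pred0 ?size_iota ?mul1n.
have kbE : (k * b = s * b + (b + (k - s.+1) * b))%N.
  by rewrite -{1}(subnKC lt_sk) mulnDl mulSn; lia.
rewrite size_map size_filter kbE !iotaD !count_cat.
rewrite (count_kept true 0) => [|i]; last by rewrite /kept; lia.
rewrite (count_kept false) => [|i]; last by rewrite /kept mulSn; lia.
rewrite (count_kept true) => [|i]; last by rewrite /kept mulSn; lia.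
by rewrite !mul1n mul0n; lia.
Qed.

Lemma coord_C0_kept (V : lmodType F) (z : V -> seq F) s u :
  (s < k)%N -> (u < k * b)%N -> (u %/ b != s)%N ->
  coord_of (fun x => C0 k (k * b) (z x) s) (fun x => (z x)`_u).
Proof.
move=> lt_sk lt_u u_out; have b_gt0 : (0 < b)%N by move: lt_u; case: (b) => //; rewrite muln0.
set kept := [seq i <- iota 0 (k * b) | ~~ ((s * b <= i) && (i < s.+1 * b))%N].
have u_kept : u \in kept by rewrite mem_filter in_block_range // u_out mem_iota.
exists (index u kept) => x.
by rewrite /C0 mulKn // lt_sk -/kept size_map index_mem (nth_map 0%N) ?index_mem ?nth_index.
Qed.

Lemma coord_C0_parity (V : lmodType F) (z : V -> seq F) r : (r < b)%N ->
  coord_of (fun x => C0 k (k * b) (z x) k) (fun x => \sum_(t < k) (z x)`_(t * b + r)).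
Proof.
move=> lt_rb; exists r => x.
by rewrite /C0 mulKn // ltnn size_map size_iota (nth_map 0%N) ?size_iota ?nth_iota.
Qed.

End CodeC0.

Section ConstructionB.

Variables (F : fieldType) (n k : nat).

Definition block (n0 : nat) (x : 'rV[F]_n) (j : nat) : seq F :=
  [seq (rv2seq x)`_(j * n0 + i) | i <- iota 0 n0].

Definition chunk (l j : nat) (x : 'rV[F]_n) : seq F :=
  C0 k (n %/ k.+1) (block (n %/ k.+1) x j) (subbucket k l j).

Lemma constructionBE (l : 'I_k.+1) :
  @constructionB F n k l = fun x => flatten [seq chunk l j x | j <- iota 0 k.+1].
Proof. by []. Qed.

Lemma size_chunk_indep l j x y : size (chunk l j x) = size (chunk l j y).
Proof. exact: size_C0_indep. Qed.

Lemma nth_rv2seq (x : 'rV[F]_n) (i : 'I_n) : (rv2seq x)`_i = x ord0 i.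
Proof.
rewrite /rv2seq (nth_map i) ?size_enum_ord //; congr (x ord0 _).
by apply: val_inj; rewrite /= nth_enum_ord.
Qed.

Lemma nth_block_div n0 (x : 'rV[F]_n) (q : 'I_n) : (0 < n0)%N ->
  (block n0 x (q %/ n0))`_(q %% n0) = x ord0 q.
Proof.
move=> n0_gt0; rewrite /block (nth_map 0%N) ?size_iota ?ltn_pmod // nth_iota ?ltn_pmod //.
by rewrite add0n -divn_eq nth_rv2seq.
Qed.

Lemma scalar_nth_block n0 j u : scalar (fun x => (block n0 x j)`_u).
Proof.
apply: (scalar_nth_map (phi := fun i x => (rv2seq x)`_(j * n0 + i))) => i.
apply: (scalar_nth_map (phi := fun i (x : 'rV[F]_n) => x ord0 i)) => i' a x y.
by rewrite !mxE.
Qed.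

Lemma scalar_nth_constructionB l i : scalar (fun x => (@constructionB F n k l x)`_i).
Proof.
rewrite constructionBE; apply: (scalar_nth_flatten (@size_chunk_indep l)) => j i'.
exact: (scalar_nth_C0 k (z := fun x => block (n %/ k.+1) x j) _ _ _ (scalar_nth_block _ _)).
Qed.

Lemma coord_constructionB (l : 'I_k.+1) J v : (J < k.+1)%N ->
  coord_of (chunk l J) v -> coord_of (@constructionB F n k l) v.
Proof.
move=> lt_J cJ; rewrite constructionBE.
have -> : iota 0 k.+1 = iota 0 J ++ J :: iota J.+1 (k - J).
  have kE : k.+1 = (J + (k - J).+1)%N by lia.
  by rewrite {1}kE iotaD.
exact: coord_of_flatten (@size_chunk_indep l) _ _ _ _ cJ.
Qed.

Lemma size_constructionB m (l : 'I_k.+1) x : (0 < k)%N -> (n %/ k.+1 = k * m)%N ->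
  size (@constructionB F n k l x) = (k * (k * m - m) + m)%N.
Proof.
move=> k_gt0 n0E; rewrite constructionBE /chunk n0E.
rewrite size_flatten /shape -map_comp sumnE big_map.
rewrite -[iota 0 k.+1]/(index_iota 0 k.+1) big_mkord.
under eq_bigr => j _ do rewrite /= size_C0 //.
pose h (j : 'I_k.+1) : 'I_k.+1 := Ordinal (subbucket_lt k l j).
have h_inj : injective h.
  move=> j1 j2 /(congr1 val) /= E; apply: val_inj.
  exact: subbucket_injr (ltn_ord l) (ltn_ord j1) (ltn_ord j2) E.
pose G (s : 'I_k.+1) := if (s < k)%N then (k * m - m)%N else m.
rewrite [LHS](_ : _ = \sum_(j < k.+1) G (h j)) //.
rewrite -(reindex_inj (P := predT) (F := G) h_inj) /= big_ord_recr /=.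
rewrite /G /= ltnn (eq_bigr (fun=> (k * m - m)%N)) => [|i _]; last by rewrite /= ltn_ord.
by rewrite sum_nat_const card_ord.
Qed.

End ConstructionB.

(* Bucket l contains x_q verbatim: x_q lies in part t = (q mod km) / m of x_J, which the
   C_0-bucket s of x_J omits exactly when s = t, while s = k is the parity bucket. *)
Definition stores_entry (k m : nat) (q l : nat) :=
  let s := subbucket k l (q %/ (k * m)) in ((s != q %% (k * m) %/ m) && (s != k))%N.

Section Requests.

Variables (F : fieldType) (k m n : nat).
Hypotheses (k_gt0 : (0 < k)%N) (m_gt0 : (0 < m)%N) (n_eq : n = (k * m * k.+1)%N).

Let L := (k * (k * m - m) + m)%N.

Let n0E : (n %/ k.+1 = k * m)%N.
Proof. by rewrite n_eq mulnK. Qed.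

Let km_gt0 : (0 < k * m)%N.
Proof. by rewrite muln_gt0 k_gt0. Qed.

Let size_C l x : size (@constructionB F n k l x) = L.
Proof. exact: size_constructionB. Qed.

Section OneRequest.

Variable q : 'I_n.

Let J := (q %/ (k * m))%N.
Let u := (q %% (k * m))%N.
Let t := (u %/ m)%N.
Let r := (u %% m)%N.

Let J_lt : (J < k.+1)%N.
Proof. by rewrite ltn_divLR // mulnC -n_eq. Qed.

Let u_lt : (u < k * m)%N.
Proof. exact: ltn_pmod. Qed.

Let t_lt : (t < k)%N.
Proof. by rewrite ltn_divLR. Qed.

Let r_lt : (r < m)%N.
Proof. exact: ltn_pmod. Qed.

Let entry_q (x : 'rV[F]_n) : x ord0 q = (block (k * m) x J)`_(t * m + r).
Proof. by rewrite -divn_eq nth_block_div. Qed.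

Lemma recovers_stored (l : 'I_k.+1) : stores_entry k m q l ->
  recovers (@constructionB F n k) (fun=> L) [set l] (fun x => x ord0 q).
Proof.
move=> /andP [ne_t ne_k].
apply: (recovers_sum (vl := fun _ x => (block (k * m) x J)`_u)) => [l'|x]; last first.
  by rewrite big_set1 entry_q -divn_eq.
rewrite inE => /eqP ->; apply: lin_comb_coord => //.
apply: coord_constructionB J_lt _; rewrite /chunk n0E; apply: coord_C0_kept => //.
  by have := subbucket_lt k l J; rewrite ltnS leq_eqVlt (negbTE ne_k).
by rewrite eq_sym.
Qed.

Lemma recovers_unstored_pair (l1 l2 : 'I_k.+1) :
  subbucket k l1 J = t -> subbucket k l2 J = k ->
  recovers (@constructionB F n k) (fun=> L) [set l1; l2] (fun x => x ord0 q).
Proof.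
move=> s1 s2; have l21 : l2 != l1.
  by apply/eqP => E; move: t_lt; rewrite -s1 -E s2 ltnn.
pose t0 : 'I_k := Ordinal t_lt.
pose y (x : 'rV[F]_n) (t' : 'I_k) := (block (k * m) x J)`_(t' * m + r).
apply: (recovers_sum (vl := fun (l : 'I_k.+1) (x : 'rV[F]_n) =>
  if l == l1 then - \sum_(t' | t' != t0) y x t' else \sum_t' y x t')) => [l|x].
  case/set2P => ->; rewrite ?eqxx ?(negbTE l21).
    apply/lin_comb_opp/lin_comb_sum => t' ne_t'; apply: lin_comb_coord => //.
    apply: coord_constructionB J_lt _; rewrite /chunk n0E s1; apply: coord_C0_kept => //.
      by have := ltn_ord t'; nia.
    by rewrite divnMDl // divn_small // addn0.
  apply: lin_comb_coord => //; apply: coord_constructionB J_lt _.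
  by rewrite /chunk n0E s2; apply: coord_C0_parity.
rewrite big_setU1 ?inE 1?eq_sym //= big_set1 eqxx (negbTE l21).
rewrite [\sum_t' y x t'](bigD1 t0) //=.
by rewrite addrCA addNr addr0 entry_q.
Qed.

Let subbucket_injl_J (l1 l2 : 'I_k.+1) : subbucket k l1 J = subbucket k l2 J -> l1 = l2.
Proof. by move=> E; apply/val_inj/(subbucket_injl (ltn_ord l1) (ltn_ord l2) J_lt). Qed.

Lemma recovers_pair (l1 l2 : 'I_k.+1) : l1 != l2 ->
  recovers (@constructionB F n k) (fun=> L) [set l1; l2] (fun x => x ord0 q).
Proof.
move=> l12; have [st1|nst1] := boolP (stores_entry k m q l1).
  by apply: recovers_subset _ (recovers_stored st1); rewrite sub1set !inE eqxx.
have [st2|nst2] := boolP (stores_entry k m q l2).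
  by apply: recovers_subset _ (recovers_stored st2); rewrite sub1set !inE eqxx orbT.
have ne_s : subbucket k l1 J != subbucket k l2 J.
  by apply: contra l12 => /eqP/subbucket_injl_J ->.
move: nst1 nst2; rewrite /stores_entry !negb_and !negbK -/J -/u -/t.
move=> /orP [] /eqP s1 /orP [] /eqP s2; try by move: ne_s; rewrite s1 s2 eqxx.
  exact: recovers_unstored_pair.
by rewrite setUC; apply: recovers_unstored_pair.
Qed.

Lemma few_unstored : (#|[set l : 'I_k.+1 | ~~ stores_entry k m q l]| <= 2)%N.
Proof.
have one_each s : (#|[set l : 'I_k.+1 | subbucket k l J == s]| <= 1)%N.
  apply/card_le1_eqP => l1 l2; rewrite !inE => /eqP s1 /eqP s2.
  by apply: subbucket_injl_J; rewrite s1 s2.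
have -> : [set l : 'I_k.+1 | ~~ stores_entry k m q l] =
    [set l : 'I_k.+1 | subbucket k l J == t] :|: [set l : 'I_k.+1 | subbucket k l J == k].
  by apply/setP => l; rewrite !inE negb_and !negbK.
by rewrite cardsU; have := one_each t; have := one_each k; lia.
Qed.

End OneRequest.

Lemma constructionB_batches (req : 'I_k -> 'I_n) :
  exists R : 'I_k.+1 -> 'I_k, (forall j, exists l, R l = j) /\
    forall j, recovers (@constructionB F n k) (fun=> L) [set l | R l == j]
                       (fun x => x ord0 (req j)).
Proof.
apply: (greedy_partition (good := fun j l => stores_entry k m (req j) l)
  (serves := fun j S => recovers (@constructionB F n k) (fun=> L) S (fun x => x ord0 (req j))))
  => //.
- by move=> j S S'; apply: recovers_subset.
- by move=> j l; apply: recovers_stored.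
- by move=> j l1 l2; apply: recovers_pair.
- by move=> j; apply: few_unstored.
by rewrite card_ord.
Qed.

End Requests.

Theorem theorem4p4 (F : finFieldType) (n k N L : nat) :
  (0 < n)%N -> (0 < k)%N -> (k * k.+1 %| n)%N ->
  (N%:R : rat) = (k%:R - 1 + k%:R^-1) * n%:R ->
  (L%:R : rat) = (k%:R - 1 + k%:R^-1) * (n%:R / k.+1%:R) ->
  is_uniform_BAC N k (fun _ : 'I_k.+1 => L) (@constructionB F n k).
Proof.
move=> n_gt0 k_gt0 /dvdnP [m n_eq] hN hL.
have {}n_eq : n = (k * m * k.+1)%N by rewrite n_eq mulnCA mulnA.
have m_gt0 : (0 < m)%N by move: n_gt0; rewrite n_eq !muln_gt0 => /andP [/andP []].
have kR : (k%:R : rat) != 0 by rewrite pnatr_eq0 -lt0n.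
have L_eq : L = (k * (k * m - m) + m)%N.
  apply/eqP; rewrite -(eqr_nat rat) hL n_eq natrD !natrM natrB ?leq_pmull // natrM.
  by apply/eqP; field; rewrite kR addrC natr1 pnatr_eq0.
have N_eq : N = (k.+1 * L)%N.
  apply/eqP; rewrite -(eqr_nat rat) hN L_eq n_eq !(natrM, natrD) natrB ?leq_pmull // natrM.
  by apply/eqP; field.
split=> //; split.
- by move=> l x; rewrite L_eq (size_constructionB (m := m) _ _ k_gt0) // n_eq mulnK.
- by rewrite L_eq addn_gt0 m_gt0 orbT.
- by rewrite sum_nat_const card_ord N_eq.
- by move=> l a x y i; apply: scalar_nth_constructionB.
move=> req; have [R [R_onto HR]] := constructionB_batches F k_gt0 m_gt0 n_eq req.
by exists R; split=> //; rewrite L_eq; apply: recovers_batch HR.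
Qed.
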